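(* For each $i\in\{1,2,3\}$, the osculating circle of $\mathcal{E}$ at $P_i$ (the circle centered at $P_i''$ passing through $P_i$) passes through both $M$ and the cusp $P_i'$. Equivalently, the circle through $M,P_i,P_i'$ osculates $\mathcal{E}$ at $P_i$, and its center lies on the evolute of $\mathcal{E}$ at parameter $t_i$.
   Context: Let $a>b>0$ and $c>0$ with $c^2=a^2-b^2$. Let $\mathcal{E}$ be the ellipse $x^2/a^2+y^2/b^2=1$ with center $O=(0,0)$, parametrized by $P(t)=(a\cos t,b\sin t)$. Fix $u\in\mathbb{R}$ and let $M=M_u=(a\cos u,b\sin u)\in\mathcal{E}$. Let $\Delta_u(t)=(x_u(t),y_u(t))$, where $x_u(t)=\frac1a\big(c^2(1+\cos(t+u))\cos t-a^2\cos u\big)$ and $y_u(t)=\frac1b\big(c^2\cos t\sin(t+u)-c^2\sin t-a^2\sin u\big)$ (the negative pedal curve of $\mathcal{E}$ with respect to $M$, i.e. the envelope of the lines through $P(t)$ perpendicular to $P(t)-M$). For $i=1,2,3$ let $t_i=-u/3-2\pi(i-1)/3$, $P_i=P(t_i)$, $P_i'=\Delta_u(t_i)$ (the cusps), and $P_i''=\left(\frac{c^2\cos^3 t_i}{a},-\frac{c^2\sin^3 t_i}{b}\right)$, the point of the evolute $\mathcal{E}^*(t)=\left(\frac{c^2\cos^3t}{a},-\frac{c^2\sin^3 t}{b}\right)$ of $\mathcal{E}$ at $t_i$, i.e. the center of curvature of $\mathcal{E}$ at $P_i$. *)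

From Stdlib Require Import Reals.
Open Scope R_scope.

Definition ellP (a b t : R) : R * R := (a * cos t, b * sin t).

(* Negative pedal curve Delta_u(t) of the ellipse with respect to M_u. *)
Definition negpedal (a b c u t : R) : R * R :=
  ( (1 / a) * (c ^ 2 * (1 + cos (t + u)) * cos t - a ^ 2 * cos u),
    (1 / b) * (c ^ 2 * cos t * sin (t + u) - c ^ 2 * sin t - a ^ 2 * sin u) ).

Definition evolute (a b c t : R) : R * R :=
  ( c ^ 2 * (cos t) ^ 3 / a, - (c ^ 2 * (sin t) ^ 3 / b) ).

Definition dist2 (p q : R * R) : R :=
  (fst p - fst q) ^ 2 + (snd p - snd q) ^ 2.

Definition t_i (u : R) (i : nat) : R := - u / 3 - 2 * PI * (INR i - 1) / 3.

From Stdlib Require Import Reals Lra Nsatz.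
Open Scope R_scope.

(* Put t = t_i u i, C = cos t and S = sin t.  By definition
   u = -3t - 2(i-1)pi, so u and t + u are, up to a multiple of 2pi, the
   angles -3t and -2t; the triple- and double-angle formulas then express
   cos u, sin u, cos (t+u), sin (t+u) as polynomials in C and S.  After this
   substitution the point M, the cusp P_i', the point P_i and the center of
   curvature P_i'' are rational functions of (C, S), and each of the two
   claimed equalities of squared distances becomes a polynomial identity
   that holds modulo the two relations C^2 + S^2 = 1 and c^2 = a^2 - b^2. *)

Lemma cos_3a (x : R) : cos (3 * x) = 4 * cos x ^ 3 - 3 * cos x.
Proof.
  replace (3 * x) with (2 * x + x) by ring.
  rewrite cos_plus, cos_2a_cos, sin_2a.
  pose proof (sin2_cos2 x) as Hpyth; unfold Rsqr in Hpyth; cbn [pow].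
  nsatz.
Qed.

Lemma sin_3a (x : R) : sin (3 * x) = 3 * sin x - 4 * sin x ^ 3.
Proof.
  replace (3 * x) with (2 * x + x) by ring.
  rewrite sin_plus, cos_2a_sin, sin_2a.
  pose proof (sin2_cos2 x) as Hpyth; unfold Rsqr in Hpyth; cbn [pow].
  nsatz.
Qed.

Lemma cos_neg_shift (x : R) (k : nat) : cos (- x - 2 * INR k * PI) = cos x.
Proof.
  rewrite <- (cos_period _ k).
  replace (- x - 2 * INR k * PI + 2 * INR k * PI) with (- x) by ring.
  apply cos_neg.
Qed.

Lemma sin_neg_shift (x : R) (k : nat) : sin (- x - 2 * INR k * PI) = - sin x.
Proof.
  rewrite <- (sin_period _ k).
  replace (- x - 2 * INR k * PI + 2 * INR k * PI) with (- x) by ring.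
  apply sin_neg.
Qed.

Lemma t_i_spec (u : R) (i : nat) :
  (1 <= i)%nat -> u = - (3 * t_i u i) - 2 * INR (i - 1) * PI.
Proof.
  intro Hi. unfold t_i. rewrite minus_INR by exact Hi. simpl INR. field.
Qed.

Lemma trig_at_t_i (u : R) (i : nat) :
  (1 <= i)%nat ->
  let t := t_i u i in
  cos u = 4 * cos t ^ 3 - 3 * cos t /\
  sin u = - (3 * sin t - 4 * sin t ^ 3) /\
  cos (t + u) = 2 * cos t ^ 2 - 1 /\
  sin (t + u) = - (2 * sin t * cos t).
Proof.
  intros Hi t.
  pose proof (t_i_spec u i Hi) as Hu; fold t in Hu.
  assert (Htu : t + u = - (2 * t) - 2 * INR (i - 1) * PI) by lra.
  rewrite Htu, Hu, cos_neg_shift, sin_neg_shift, cos_neg_shift, sin_neg_shift.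
  rewrite cos_3a, sin_3a, cos_2a_cos, sin_2a.
  repeat split; ring.
Qed.

(* The
   inverses 1/a, 1/b become fresh variables ia, ib with a ia = b ib = 1, so the
   claim is an ideal-membership problem, decided by nsatz. *)
Lemma osculating_circle_through_M_alg (a b c C S : R) :
  a <> 0 -> b <> 0 -> c ^ 2 = a ^ 2 - b ^ 2 -> S ^ 2 + C ^ 2 = 1 ->
  dist2 (a * (4 * C ^ 3 - 3 * C), b * - (3 * S - 4 * S ^ 3))
        (c ^ 2 * C ^ 3 / a, - (c ^ 2 * S ^ 3 / b))
  = dist2 (a * C, b * S) (c ^ 2 * C ^ 3 / a, - (c ^ 2 * S ^ 3 / b)).
Proof.
  intros Ha Hb Hc Hpyth. unfold dist2, Rdiv; cbn [fst snd].
  pose proof (Rinv_r a Ha) as Hia. pose proof (Rinv_r b Hb) as Hib.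
  set (ia := / a) in *. set (ib := / b) in *. clearbody ia ib.
  cbn [pow] in *. nsatz.
Qed.

Lemma osculating_circle_through_cusp_alg (a b c C S : R) :
  a <> 0 -> b <> 0 -> c ^ 2 = a ^ 2 - b ^ 2 -> S ^ 2 + C ^ 2 = 1 ->
  dist2 (1 / a * (c ^ 2 * (1 + (2 * C ^ 2 - 1)) * C - a ^ 2 * (4 * C ^ 3 - 3 * C)),
         1 / b * (c ^ 2 * C * - (2 * S * C) - c ^ 2 * S
                  - a ^ 2 * - (3 * S - 4 * S ^ 3)))
        (c ^ 2 * C ^ 3 / a, - (c ^ 2 * S ^ 3 / b))
  = dist2 (a * C, b * S) (c ^ 2 * C ^ 3 / a, - (c ^ 2 * S ^ 3 / b)).
Proof.
  intros Ha Hb Hc Hpyth. unfold dist2, Rdiv; cbn [fst snd].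
  pose proof (Rinv_r a Ha) as Hia. pose proof (Rinv_r b Hb) as Hib.
  set (ia := / a) in *. set (ib := / b) in *. clearbody ia ib.
  cbn [pow] in *. nsatz.
Qed.

Theorem proposition3p3 (a b c u : R) (i : nat) :
  a > b -> b > 0 -> c > 0 -> c ^ 2 = a ^ 2 - b ^ 2 ->
  (1 <= i <= 3)%nat ->
  let ti := t_i u i in
  let Pi := ellP a b ti in
  let Pi' := negpedal a b c u ti in
  let Pi'' := evolute a b c ti in
  let M := ellP a b u in
  dist2 M Pi'' = dist2 Pi Pi'' /\ dist2 Pi' Pi'' = dist2 Pi Pi''.
Proof.
  intros Hab Hb _ Hc2 [Hi _] ti Pi Pi' Pi'' M.
  destruct (trig_at_t_i u i Hi) as (Hcu & Hsu & Hctu & Hstu); fold ti in Hcu, Hsu, Hctu, Hstu.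
  assert (Hpyth : sin ti ^ 2 + cos ti ^ 2 = 1).
  { pose proof (sin2_cos2 ti) as H. unfold Rsqr in H. lra. }
  assert (Ha0 : a <> 0) by lra. assert (Hb0 : b <> 0) by lra.
  unfold Pi, Pi', Pi'', M, ellP, negpedal, evolute.
  rewrite Hcu, Hsu, Hctu, Hstu.
  split.
  - exact (osculating_circle_through_M_alg a b c _ _ Ha0 Hb0 Hc2 Hpyth).
  - exact (osculating_circle_through_cusp_alg a b c _ _ Ha0 Hb0 Hc2 Hpyth).
Qed.
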